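(* Let $n\ge 2$ be an integer and $A\subseteq L_n$. If $(X_n,\tau(A))$ is $\sigma$-compact, then $(X_n,\tau(A))$ is second-countable.
   Context: For $\overline{x},\overline{a}\in\mathbb R^n$ let $|\overline{x}-\overline{a}|$ be the Euclidean distance and $B(\overline{a},\epsilon)=\{\overline{x}\in\mathbb R^n:|\overline{x}-\overline{a}|<\epsilon\}$. Let $P_n=\{\overline{x}\in\mathbb R^n: x_n>0\}$, $L_n=\{\overline{x}\in\mathbb R^n: x_n=0\}$, $X_n=P_n\cup L_n$. For $\overline{a}\in L_n$ and $\epsilon>0$ put $\overline{a(\epsilon)}=(a_1,\dots,a_{n-1},\epsilon)$ and $\tilde B(\overline{a},\epsilon)=\{\overline{a}\}\cup B(\overline{a(\epsilon)},\epsilon)$. For $A\subseteq L_n$, the topology $\tau(A)$ on $X_n$ is generated by the local bases: at $\overline{a}\in P_n$, the sets $B(\overline{a},\epsilon)$ with $0<\epsilon<a_n$; at $\overline{a}\in A$, the sets $B(\overline{a},\epsilon)\cap X_n$ with $\epsilon>0$; at $\overline{a}\in L_n\setminus A$, the sets $\tilde B(\overline{a},\epsilon)$ with $\epsilon>0$. *)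

From HB Require Import structures.
From mathcomp Require Import all_boot all_order all_algebra.
From mathcomp Require Import all_classical all_reals all_analysis.
Set Implicit Arguments. Unset Strict Implicit. Unset Printing Implicit Defensive.
Import Order.TTheory GRing.Theory Num.Theory.
Local Open Scope classical_set_scope.
Local Open Scope ring_scope.

Section TauA.
Variables (R : realType) (n : nat).

(* points of R^n are row vectors 'rV[R]_n; coordinate x_k (1-based) is x 0 (k-1) *)

Definition xlast (x : 'rV[R]_n) : R :=
  if [pick i : 'I_n | val i == n.-1] is Some i then x 0 i else 0.

Definition edist (x a : 'rV[R]_n) : R :=
  Num.sqrt (\sum_(i < n) (x 0 i - a 0 i) ^+ 2).

Definition eball (a : 'rV[R]_n) (eps : R) : set 'rV[R]_n :=
  [set x | edist x a < eps].

Definition Pn : set 'rV[R]_n := [set x | 0 < xlast x].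
Definition Ln : set 'rV[R]_n := [set x | xlast x = 0].
Definition Xset : set 'rV[R]_n := [set x | 0 <= xlast x].

Definition a_eps (a : 'rV[R]_n) (eps : R) : 'rV[R]_n :=
  \row_(i < n) (if val i == n.-1 then eps else a 0 i).

Definition tball (a : 'rV[R]_n) (eps : R) : set 'rV[R]_n :=
  [set a] `|` eball (a_eps a eps) eps.

Definition tau_basic (A : set 'rV[R]_n) (U : set 'rV[R]_n) : Prop :=
  (exists a eps, Pn a /\ 0 < eps /\ eps < xlast a /\ U = eball a eps) \/
  (exists a eps, A a /\ 0 < eps /\ U = eball a eps `&` Xset) \/
  (exists a eps, Ln a /\ ~ A a /\ 0 < eps /\ U = tball a eps).

(* the carrier X_n, tagged by A so that it carries the topology tau(A) *)
Definition XnA (A : set 'rV[R]_n) : Type := {x : 'rV[R]_n | 0 <= xlast x}.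

End TauA.

HB.instance Definition _ (R : realType) n (A : set 'rV[R]_n) :=
  Choice.copy (XnA A) {x : 'rV[R]_n | 0 <= xlast x}.

Definition tau_subbase (R : realType) n (A : set 'rV[R]_n) : set (set (XnA A)) :=
  [set V | exists U, tau_basic A U /\ V = (fun p : XnA A => U (val p))].

HB.instance Definition _ (R : realType) n (A : set 'rV[R]_n) :=
  isSubBaseTopological.Build (XnA A) (@tau_subbase R n A) id.

Definition sigma_compact (T : topologicalType) : Prop :=
  exists K : nat -> set T, (forall i, compact (K i)) /\ \bigcup_i K i = setT.

From Pilot Require Import Defs.
From HB Require Import structures.
From mathcomp Require Import all_boot all_order all_algebra.
From mathcomp Require Import all_classical all_reals all_analysis.
From mathcomp Require Import finmap lra.
Set Implicit Arguments. Unset Strict Implicit. Unset Printing Implicit Defensive.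
Import Order.TTheory GRing.Theory Num.Theory.
Import numFieldNormedType.Exports.
Local Open Scope classical_set_scope.
Local Open Scope ring_scope.

(* Away from [Ln `\` A] the topology tau(A) is Euclidean, so rational balls
   form a base there. At a point [a] of [Ln `\` A] the neighbourhoods are the
   tangent discs [tball a e], which meet [Ln] only in [a]; since [tball a 1]
   and the complements of the closed balls around [a] cover any compact [K]
   containing [a], [K] meets [Ln] near [a] only in [a]. So at each scale
   [1 / k.+1] the points of [K] in [Ln `\` A] are uniformly separated, hence
   countably many, and sigma-compactness makes [Ln `\` A] countable. The
   tangent discs of radii [1 / m.+1] at these points, together with the
   rational balls, are then a countable base. *)

(* MathComp-Analysis has its own [edist]. *)
Local Notation edist := Defs.edist.

Lemma archi_natSinv_lt (R : archiRealFieldType) (d : R) :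
  0 < d -> exists k : nat, k.+1%:R^-1 < d.
Proof.
move=> d0; have [N _ hN] := near_infty_natSinv_lt (PosNum d0).
by exists N; apply: hN => /=.
Qed.

Lemma countableU T (A B : set T) :
  countable A -> countable B -> countable (A `|` B).
Proof.
by move=> cA cB; rewrite -bigcup2E; apply: bigcup_countable => [|[|[|i]] _].
Qed.

Section Coordinates.
Variables (R : realType) (n : nat).
Hypothesis n_gt0 : (0 < n)%N.

Definition ilast : 'I_n := Ordinal (etrans (ltn_predL n) n_gt0).

Lemma xlastE (x : 'rV[R]_n) : xlast x = x 0 ilast.
Proof.
rewrite /xlast; case: pickP => [i /eqP hi|/(_ ilast)]; last by rewrite eqxx.
by congr (x 0 _); apply: val_inj.
Qed.

Lemma a_epsE (a : 'rV[R]_n) e i :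
  a_eps a e 0 i = if i == ilast then e else a 0 i.
Proof. by rewrite mxE. Qed.

Lemma ball_rowE (x y : 'rV[R]_n) e :
  ball x e y <-> 0 < e /\ forall i, `|x 0 i - y 0 i| < e.
Proof.
split=> [[e0 xy]|[e0 xy]]; split=> // i; first exact: xy 0 i.
by move=> j; rewrite (ord1 i); exact: xy.
Qed.

Lemma coord_le_edist (x y : 'rV[R]_n) i : `|x 0 i - y 0 i| <= edist x y.
Proof.
rewrite /edist -sqrtr_sqr; apply: ler_wsqrtr.
by rewrite (bigD1 i) //= lerDl; apply: sumr_ge0 => j _; exact: sqr_ge0.
Qed.

Lemma eball_sub_ball (x : 'rV[R]_n) e : eball x e `<=` ball x e.
Proof.
move=> y xy; apply/ball_rowE; split => [|i].
  exact: le_lt_trans (sqrtr_ge0 _) xy.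
by rewrite distrC; exact: le_lt_trans (coord_le_edist y x i) xy.
Qed.

Lemma edistxx (x : 'rV[R]_n) : edist x x = 0.
Proof. by rewrite /edist big1 ?sqrtr0 // => i _; rewrite subrr expr0n. Qed.

Lemma edist_ltE (x y : 'rV[R]_n) e : 0 < e ->
  (edist x y < e) = (\sum_(i < n) (x 0 i - y 0 i) ^+ 2 < e ^+ 2).
Proof.
move=> e0; rewrite /edist -[X in _ < X](gtr0_norm e0) -sqrtr_sqr.
by rewrite ltr_sqrt // exprn_gt0.
Qed.

Lemma continuous_edist (b : 'rV[R]_n) :
  continuous (fun z : 'rV[R]_n => edist z b).
Proof.
move=> z; apply: (@continuous_comp _ _ _
  (fun z : 'rV[R]_n => \sum_(i < n) (z 0 i - b 0 i) ^+ 2) (@Num.sqrt R));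
  last exact: sqrt_continuous.
apply: (continuous_big add_continuous) => i _ {}z.
have coordB : continuous (fun z : 'rV[R]_n => z 0 i - b 0 i).
  move=> w; apply: continuousB; first exact: coord_continuous.
  exact: cst_continuous.
under eq_fun do rewrite expr2.
exact: (continuousM (coordB z) (coordB z)).
Qed.

Lemma eball_open (b : 'rV[R]_n) e : open (eball b e).
Proof.
have -> : eball b e = (fun z => edist z b) @^-1` [set r | r < e] by [].
apply: open_comp; last exact: open_lt.
by move=> x _; exact: continuous_edist.
Qed.

Lemma tball_sub_ball (x : 'rV[R]_n) e : 0 < e -> xlast x = 0 ->
  tball x (e / 2) `<=` ball x e.
Proof.
move=> e0 x0 y [->|]; first exact: ballxx.
rewrite /eball /= => ye; apply/ball_rowE; split => // i.
have := coord_le_edist y (a_eps x (e / 2)) i; rewrite a_epsE.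
case: eqP => [->|_] yi; last by rewrite distrC; lra.
rewrite -xlastE x0 sub0r normrN.
have e2 : 0 < e / 2 by rewrite divr_gt0.
have := ler_distD (e / 2) (y 0 ilast) 0; rewrite !subr0 (gtr0_norm e2); lra.
Qed.

Lemma tball_Ln (x y : 'rV[R]_n) e :
  0 < e -> tball x e y -> xlast y = 0 -> y = x.
Proof.
move=> e0 [//|ye] y0; have := coord_le_edist y (a_eps x e) ilast.
rewrite a_epsE eqxx -xlastE y0 sub0r normrN gtr0_norm //.
by move=> /le_lt_trans /(_ ye); rewrite ltxx.
Qed.

Lemma tball_le (x y : 'rV[R]_n) e1 e2 : 0 < e1 -> e1 <= e2 -> 0 <= xlast y ->
  tball x e1 y -> tball x e2 y.
Proof.
move=> e10 e12 y0 [->|ye]; [by left|right].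
have e20 : 0 < e2 by apply: lt_le_trans e12.
have sqr_a_eps e : \sum_(i < n) (y 0 i - a_eps x e 0 i) ^+ 2 =
    \sum_(i < n | i != ilast) (y 0 i - x 0 i) ^+ 2 + (y 0 ilast - e) ^+ 2.
  rewrite (bigD1 ilast) //= addrC a_epsE eqxx; congr (_ + _).
  by apply: eq_bigr => i /negbTE iN; rewrite a_epsE iN.
move: ye; rewrite /eball /= !edist_ltE // !sqr_a_eps xlastE in y0 *.
have : 0 <= \sum_(i < n | i != ilast) (y 0 i - x 0 i) ^+ 2.
  by apply: sumr_ge0 => i _; exact: sqr_ge0.
nra.
Qed.

Lemma open_subtball (O : set 'rV[R]_n) (x : 'rV[R]_n) : open O -> O x ->
  xlast x = 0 -> exists2 e, 0 < e & tball x e `<=` O.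
Proof.
move=> oO Ox x0.
have /nbhs_ballP [e /= e0 eO] : nbhs x O by apply: open_nbhs_nbhs; split.
by exists (e / 2); [rewrite divr_gt0|move=> y /(tball_sub_ball e0 x0) /eO].
Qed.

Definition ratv (q : 'rV[rat]_n) : 'rV[R]_n := map_mx ratr q.

Lemma rat_approx (x : 'rV[R]_n) d : 0 < d ->
  exists q : 'rV[rat]_n, forall i, `|x 0 i - ratv q 0 i| < d.
Proof.
move=> d0; pose S i := [set r : rat | `|x 0 i - ratr r| < d].
have S_ex i : exists r, S i r.
  have /rat_in_itvoo [r] : x 0 i - d < x 0 i + d by rewrite ltrD2l gtrN.
  by rewrite in_itv /= => xr; exists r; rewrite /S /= ltr_distlC.
exists (\row_i xget 0%R (S i)) => i; rewrite /ratv !mxE.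
exact: (xgetPex 0%R (S_ex i)).
Qed.

Lemma rat_ball (x : 'rV[R]_n) e : 0 < e -> exists q r,
  ball (ratv q) (ratr r) x /\ ball (ratv q) (ratr r) `<=` ball x e.
Proof.
move=> e0; have e3 : 0 < e / 3 by rewrite divr_gt0.
have [q xq] := rat_approx x e3.
have /rat_in_itvoo [r] : e / 3 < 2 * e / 3.
  by rewrite ltr_pM2r ?invr_gt0 //; lra.
rewrite in_itv /= => /andP [e3r r2e3]; exists q, r; split.
  apply/ball_rowE; split => [|i]; first exact: lt_trans e3 e3r.
  by rewrite distrC; apply: lt_trans (xq i) e3r.
move=> y /ball_rowE [_ qy]; apply/ball_rowE; split => // i.
apply: le_lt_trans (ler_distD (ratv q 0 i) _ _) _.
by have := xq i; have := qy i; lra.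
Qed.

(* Points of [S] are told apart by rational vectors within [r / 2] of them. *)
Lemma separated_countable (S : set 'rV[R]_n) r : 0 < r ->
  (forall x y, S x -> S y -> ball x r y -> x = y) -> countable S.
Proof.
move=> r0 Ssep; have r20 : 0 < r / 2 by rewrite divr_gt0.
have /all_sig [q xq] := fun x => cid (rat_approx x r20).
have q_inj : {in S &, injective q}.
  move=> x y /set_mem Sx /set_mem Sy qxy; apply: Ssep => //.
  apply/ball_rowE; split => // i.
  apply: le_lt_trans (ler_distD (ratv (q x) 0 i) _ _) _.
  by have := xq x i; have := xq y i; rewrite qxy (distrC (y 0 i)); lra.
by rewrite -(eq_countable (inj_card_eq q_inj)); exact: countableP.
Qed.

End Coordinates.

Lemma xlast0_ge0 (R : realType) n : 0 <= xlast (0 : 'rV[R]_n).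
Proof. by rewrite /xlast; case: pickP => [i _|_]; rewrite ?mxE. Qed.

HB.instance Definition _ (R : realType) n (A : set 'rV[R]_n) :=
  isPointed.Build (XnA A) (exist _ (0 : 'rV[R]_n) (xlast0_ge0 R n)).

Section TauTopology.
Variables (R : realType) (n : nat) (A : set 'rV[R]_n).
Hypothesis n_gt0 : (0 < n)%N.
Local Notation X := (XnA A).
Local Notation D := (@Ln R n `\` A).

(* Neighbourhood base of [x] in tau(A), with Euclidean balls replaced by the
   equivalent sup-norm balls [ball] of ['rV[R]_n]. *)
Definition tau_ball (x : 'rV[R]_n) e : set 'rV[R]_n :=
  if pselect (D x) then tball x e else ball x e.

Lemma tau_ball_tball x e : D x -> tau_ball x e = tball x e.
Proof. by rewrite /tau_ball; case: pselect. Qed.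

Lemma tau_ball_ball x e : ~ D x -> tau_ball x e = ball x e.
Proof. by rewrite /tau_ball; case: pselect. Qed.

Lemma tau_ball_le x y e1 e2 : 0 < e1 -> e1 <= e2 -> 0 <= xlast y ->
  tau_ball x e1 y -> tau_ball x e2 y.
Proof.
rewrite /tau_ball; case: (pselect (D x)) => Dx /= e10 e12 y0.
  exact: (tball_le n_gt0 e10 e12 y0).
exact: (le_ball e12).
Qed.

Lemma tau_ball_sub_ball x e : 0 < e -> tau_ball x (e / 2) `<=` ball x e.
Proof.
rewrite /tau_ball; case: (pselect (D x)) => [[x0 _]|Dx] /= e0.
  exact: (tball_sub_ball n_gt0 e0 x0).
by apply: le_ball; lra.
Qed.

Lemma open_sub_tau_ball (O : set 'rV[R]_n) x : open O -> O x ->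
  exists2 e, 0 < e & tau_ball x e `<=` O.
Proof.
rewrite /tau_ball; case: (pselect (D x)) => [[x0 _]|Dx] /= oO Ox.
  exact: (open_subtball n_gt0 oO Ox x0).
have /nbhs_ballP [e /= e0 eO] : nbhs x O by apply: open_nbhs_nbhs; split.
by exists e.
Qed.

Lemma open_tau_basic U : tau_basic A U -> open (val @^-1` U : set X).
Proof.
move=> bU; exists [set val @^-1` U]; last exact: bigcup_set1.
by move=> _ ->; apply: finI_from1; exists U.
Qed.

Lemma tau_basic_sub_tau_ball (p : X) U : tau_basic A U -> U (val p) ->
  exists2 e, 0 < e & forall q : X, tau_ball (val p) e (val q) -> U (val q).
Proof.
case=> [[a [e [_ [_ [_ ->]]]]]|[[a [e [_ [_ ->]]]]|[a [e [aL [aA [e0 ->]]]]]]].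
- move=> /(open_sub_tau_ball (@eball_open _ _ a e)) [d d0 dU].
  by exists d => // q /dU.
- case=> /(open_sub_tau_ball (@eball_open _ _ a e)) [d d0 dU] _.
  by exists d => // q /dU qU; split => //; exact: valP q.
- case=> [pa|/(open_sub_tau_ball (@eball_open _ _ (a_eps a e) e)) [d d0 dU]].
    by exists e => // q; rewrite pa tau_ball_tball.
  by exists d => // q /dU; right.
Qed.

Lemma nbhs_tau_ball (p : X) e : 0 < e -> nbhs p (val @^-1` tau_ball (val p) e).
Proof.
move=> e0; set x := val p.
have basic_nbhs U W : tau_basic A U -> U x -> U `<=` W -> nbhs p (val @^-1` W).
  move=> bU Ux UW; apply: (@filterS _ _ _ (val @^-1` U)) => [q /UW //|].
  by apply: open_nbhs_nbhs; split => //; exact: open_tau_basic.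
have [x_gt0|x0] : 0 < xlast x \/ xlast x = 0.
  by have := valP p; rewrite le_eqVlt => /orP [/eqP <-|]; [right|left].
- rewrite tau_ball_ball; last by case=> /= x0; move: x_gt0; rewrite x0 ltxx.
  set r := Num.min e (xlast x / 2).
  have r0 : 0 < r by rewrite lt_min e0 divr_gt0.
  apply: (basic_nbhs (eball x r)).
  + by left; exists x, r; rewrite gt_min; do !split => //; lra.
  + by rewrite /eball /= edistxx.
  + by move=> y /eball_sub_ball; apply: le_ball; rewrite ge_min lexx.
- have [Ax|Ax] := pselect (A x).
    rewrite tau_ball_ball; last by case.
    apply: (basic_nbhs (eball x e `&` @Xset R n)).
    + by right; left; exists x, e.
    + by split; [rewrite /eball /= edistxx|exact: valP p].
    + by move=> y [/eball_sub_ball].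
  rewrite tau_ball_tball //.
  apply: (basic_nbhs (tball x e)) => //; last by left.
  by right; right; exists x, e.
Qed.

Lemma nbhs_tauP (p : X) V :
  nbhs p V <-> exists2 e, 0 < e & val @^-1` tau_ball (val p) e `<=` V.
Proof.
split=> [|[e e0 eV]]; last exact: (filterS eV (nbhs_tau_ball p e0)).
rewrite nbhsE => -[W [[B Bbase <-] [U BU Up]] WV].
have [F Fsub UF] := Bbase U BU.
pose G := filter_from [set e | 0 < e]
  (fun e => val @^-1` tau_ball (val p) e : set X).
have G_filter : Filter G.
  apply: filter_from_filter; first by exists 1; rewrite /= ltr01.
  move=> e1 e2 e10 e20; have m0 : 0 < Num.min e1 e2 by rewrite lt_min e10 e20.
  exists (Num.min e1 e2) => // q qm.
  by split; apply: tau_ball_le m0 _ (valP q) qm; rewrite ge_min lexx ?orbT.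
suff [e e0 eU] : G U by exists e => // q /eU Uq; apply: WV; exists U.
rewrite -UF; apply: filter_bigI => S SF.
have Sp : S p by move: Up; rewrite -UF => /(_ S SF).
have /set_mem [U0 [bU0 SU0]] := Fsub S SF.
rewrite SU0 in Sp *; have [e e0 eU0] := tau_basic_sub_tau_ball bU0 Sp.
by exists e.
Qed.

Lemma open_preimage_val (E : set 'rV[R]_n) :
  open E -> open (val @^-1` E : set X).
Proof.
move=> oE; rewrite openE => p Ep.
have /nbhs_ballP [e /= e0 eE] : nbhs (val p) E.
  by apply: open_nbhs_nbhs; split.
apply/nbhs_tauP; exists (e / 2); first by rewrite divr_gt0.
by move=> q /(tau_ball_sub_ball e0) /eE.
Qed.

Lemma compact_Ln_isolated (K : set X) (p : X) :
  compact K -> K p -> D (val p) ->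
  exists2 r, 0 < r & forall q : X,
    K q -> xlast (val q) = 0 -> ball (val p) r (val q) -> val q = val p.
Proof.
rewrite compact_cover => Kc Kp Dp; set c := val p.
pose f (j : nat) : set X :=
  val @^-1` if j is j'.+1 then ~` closed_ball c j'.+1%:R^-1 else tball c 1.
have f_open j : [set: nat] j -> open (f j).
  case: j => [|j] _.
    by apply: open_tau_basic; right; right; exists c, 1; case: Dp.
  by apply: open_preimage_val; apply: closed_openC; exact: closed_ball_closed.
have K_cover : K `<=` cover [set: nat] f.
  move=> q _; have [qc|qc] := eqVneq (val q) c; first by exists 0%N => //; left.
  have d0 : 0 < `|c - val q| by rewrite normr_gt0 subr_eq0 eq_sym.
  have [j jd] := archi_natSinv_lt d0.
  exists j.+1 => //=; rewrite closed_ballE ?invr_gt0 //= => cq.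
  by have := lt_le_trans jd cq; rewrite ltxx.
have [F _ KF] := Kc _ _ _ f_open K_cover.
exists (\max_(j <- F) j).+1%:R^-1 => [|q Kq q0 pq]; first by rewrite invr_gt0.
have [[|j] jF /= fjq] := KF q Kq; first exact: (tball_Ln n_gt0 ltr01 fjq q0).
exfalso; apply: fjq; apply: subset_closed_ball; apply: le_ball pq.
rewrite lef_pV2 ?posrE // ler_nat ltnS; apply: ltnW.
exact: (leq_bigmax_seq (F := id) (P := xpredT) _ jF).
Qed.

Lemma sigma_compact_countable_Ln_setD : sigma_compact X -> countable D.
Proof.
move=> [K [Kc KT]].
pose S i k := [set x | xlast x = 0 /\ exists p : X, [/\ val p = x, K i p &
  forall q : X,
    K i q -> xlast (val q) = 0 -> ball x k.+1%:R^-1 (val q) -> val q = x]].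
apply: (@sub_countable _ _ _ (\bigcup_i \bigcup_k S i k)).
  apply: subset_card_le => x Dx; have x0 : xlast x = 0 by case: Dx.
  have x_ge0 : 0 <= xlast x by rewrite x0.
  have [i _ Kp] : (\bigcup_i K i) (exist _ x x_ge0 : X) by rewrite KT.
  have [r r0 rsep] := compact_Ln_isolated (Kc i) Kp Dx.
  have [k kr] := archi_natSinv_lt r0.
  exists i => //; exists k => //; split => //.
  exists (exist _ x x_ge0); split => //.
  by move=> q Kq q0 /(le_ball (ltW kr)); exact: rsep.
apply: bigcup_countable => // i _; apply: bigcup_countable => // k _.
apply: (@separated_countable _ _ _ k.+1%:R^-1); first by rewrite invr_gt0.
move=> x y [_ [p [<- _ psep]]] [y0 [q [qy Kq _]]]; rewrite -qy in y0 * => pq.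
by symmetry; apply: psep.
Qed.

Definition tau_base : set (set X) := (fun U => val @^-1` U) @`
  (range (fun qr : 'rV[rat]_n * rat => ball (ratv R qr.1) (ratr qr.2)) `|`
   [set tball dm.1 dm.2.+1%:R^-1 | dm in D `*` [set: nat]]).

Lemma countable_tau_base : countable D -> countable tau_base.
Proof.
move=> cD; apply: sub_countable (card_image_le _ _) _; apply: countableU.
  exact: sub_countable (card_image_le _ _) (countableP _).
exact: sub_countable (card_image_le _ _) (countableX cD (countableP _)).
Qed.

Lemma tau_base_basis : basis tau_base.
Proof.
split=> [_ [U [[qr _ <-]|[[d m] [Dd _] <-]] <-]|p V /nbhs_tauP [e e0 eV]].
- exact/open_preimage_val/ball_open.
- apply: open_tau_basic; right; right; exists d, m.+1%:R^-1.
  by case: Dd => dL dA; rewrite invr_gt0.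
have [Dp|Dp] := pselect (D (val p)).
  have [m me] := archi_natSinv_lt e0.
  have m0 : 0 < m.+1%:R^-1 :> R by rewrite invr_gt0.
  exists (val @^-1` tball (val p) m.+1%:R^-1).
    split; last by left.
    by exists (tball (val p) m.+1%:R^-1) => //; right; exists (val p, m).
  move=> q pq; apply: eV; rewrite /= tau_ball_tball //.
  exact: (tball_le n_gt0 m0 (ltW me) (valP q) pq).
have [q [r [pqr qre]]] := rat_ball (val p) e0.
exists (val @^-1` ball (ratv R q) (ratr r)).
  by split => //; exists (ball (ratv R q) (ratr r)) => //; left; exists (q, r).
by move=> y /qre ye; apply: eV; rewrite /= tau_ball_ball.
Qed.

End TauTopology.

Theorem mainTheorem15 (R : realType) (n : nat) (hn : (2 <= n)%N)
  (A : set 'rV[R]_n) (hA : A `<=` @Ln R n) :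
  sigma_compact (XnA A) -> @second_countable (XnA A).
Proof.
move=> sK; have n_gt0 : (0 < n)%N := ltnW hn.
exists (tau_base (A := A)); last exact: tau_base_basis.
exact/countable_tau_base/(sigma_compact_countable_Ln_setD n_gt0).
Qed.
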